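(* Let $G_c^w$ be an edge-coloured edge-weighted multi-graph (half-edge colouring $c$, edge weights $w$) which is g-GHZ. Then there is a weight function $w'$ on the edges such that $G_c^{w'}$ (same multi-graph, same half-edge colouring) is a GHZ graph with the same dimension as $G_c^w$.
   Context: Multi-graphs have no self-loops. Each edge $e$ between $u$ and $v$ consists of two half-edges $e_u$ and $e_v$. A half-edge colouring is a function $c$ from the set of half-edges to $\mathbb{N}_0$; each edge $e$ also gets a weight $w(e)\in\mathbb{C}$. The weight of a perfect matching $P$ is $\prod_{e\in P}w(e)$. A vertex colouring is a map $vc:V\to\mathbb{N}_0$; it filters out the subgraph consisting of all edges $e$ (between $u,v$) with $c(e_u)=vc(u)$ and $c(e_v)=vc(v)$ (with the same weights). The weight of $vc$ is the sum of the weights of all perfect matchings of this filtered subgraph; $vc$ is feasible if the filtered subgraph has at least one perfect matching (an infeasible colouring has weight $0$). The graph is GHZ if every feasible monochromatic vertex colouring has weight $1$ and every non-monochromatic vertex colouring has weight $0$. It is g-GHZ if every feasible monochromatic vertex colouring has non-zero weight and every non-monochromatic vertex colouring has weight $0$. In both cases the dimension is the number of feasible monochromatic vertex colourings. *)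

From mathcomp Require Import all_boot all_algebra.
From mathcomp Require Import Rstruct.
From mathcomp Require Import complex.
Set Implicit Arguments. Unset Strict Implicit. Unset Printing Implicit Defensive.
Import GRing.Theory.
Local Open Scope ring_scope.

Notation CC := (Rdefinitions.R)[i].

Section GHZ.
(* A multigraph: finite vertex type V, finite edge type E (distinct edges may
   share endpoints), each edge e joins (ends e).1 and (ends e).2.
   Half-edges of e: (e,false) at (ends e).1 and (e,true) at (ends e).2. *)
Variables (V E : finType) (ends : E -> V * V).
Variables (c : E -> bool -> nat) (w : E -> CC).

Definition incident (e : E) (v : V) : bool := ((ends e).1 == v) || ((ends e).2 == v).

Definition filtered (vc : V -> nat) (e : E) : bool :=
  (c e false == vc (ends e).1) && (c e true == vc (ends e).2).

Definition pmb (vc : V -> nat) (P : {set E}) : bool :=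
  [forall e, (e \in P) ==> filtered vc e] &&
  [forall v : V, #|[set e in P | incident e v]| == 1%N].

Definition vc_weight (vc : V -> nat) : CC :=
  \sum_(P : {set E} | pmb vc P) \prod_(e in P) w e.

Definition feasible (vc : V -> nat) : Prop := exists P, pmb vc P.

Definition monochromatic (vc : V -> nat) : Prop := exists k, forall v, vc v = k.

Definition is_GHZ : Prop :=
  (forall vc, monochromatic vc -> feasible vc -> vc_weight vc = 1) /\
  (forall vc, ~ monochromatic vc -> vc_weight vc = 0).

Definition is_gGHZ : Prop :=
  (forall vc, monochromatic vc -> feasible vc -> vc_weight vc != 0) /\
  (forall vc, ~ monochromatic vc -> vc_weight vc = 0).

(* the dimension is n: there are exactly n feasible monochromatic colourings
   (a monochromatic colouring is determined by its colour k) *)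
Definition has_dimension (n : nat) : Prop :=
  exists s : seq nat, [/\ uniq s, size s = n &
    forall k, k \in s <-> feasible (fun _ => k)].

End GHZ.

From mathcomp Require Import all_boot all_algebra.
From mathcomp Require Import Rstruct complex.
From Stdlib Require Import FunctionalExtensionality.
Set Implicit Arguments. Unset Strict Implicit. Unset Printing Implicit Defensive.
Import GRing.Theory.
Local Open Scope ring_scope.

(* Fix a vertex v0.  Every perfect matching of a filtered subgraph contains
   exactly one edge at v0, and the colour of that edge at v0 is vc v0.  Hence
   multiplying the weight of every edge at v0 by f(its colour at v0) multiplies
   the weight of every vertex colouring vc by f (vc v0).  Taking f k to be the
   inverse of the (non-zero) weight of the feasible monochromatic colouring k
   normalises these weights to 1 and keeps the other weights 0.  Feasibility. *)

Section Rescaling.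
Variables (V E : finType) (ends : E -> V * V) (c : E -> bool -> nat) (v0 : V).

Definition colour_at (e : E) : nat :=
  if (ends e).1 == v0 then c e false else c e true.

Definition rescale_at (f : nat -> CC) (w : E -> CC) (e : E) : CC :=
  if incident ends e v0 then w e * f (colour_at e) else w e.

Lemma filtered_colour_at vc e :
  filtered ends c vc e -> incident ends e v0 -> colour_at e = vc v0.
Proof.
rewrite /filtered /colour_at /incident => /andP[/eqP -> /eqP ->].
by case: eqP => [-> | _ /= /eqP ->].
Qed.

Lemma pmb_edge_at vc P : pmb ends c vc P ->
  exists e, [/\ [set i in P | incident ends i v0] = [set e],
               incident ends e v0 & colour_at e = vc v0].
Proof.
case/andP => /forallP P_filtered /forallP P_cover.
have [e Pv0] := cards1P (P_cover v0).
have : e \in [set i in P | incident ends i v0] by rewrite Pv0 set11.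
rewrite inE => /andP[eP e_v0]; exists e; split=> //.
exact: filtered_colour_at (implyP (P_filtered e) eP) e_v0.
Qed.

Lemma prod_rescale_at f w vc P : pmb ends c vc P ->
  \prod_(e in P) rescale_at f w e = f (vc v0) * \prod_(e in P) w e.
Proof.
case/pmb_edge_at => e [Pv0 e_v0 col_e].
have prod_at (F : E -> CC) : \prod_(i in P | incident ends i v0) F i = F e.
  by rewrite -(@big_set1 CC 1 *%R _ e F) -Pv0; apply: eq_bigl => i; rewrite inE.
rewrite (bigID (incident ends ^~ v0)) [in RHS](bigID (incident ends ^~ v0)) /=.
rewrite !prod_at /rescale_at e_v0 col_e mulrA [f _ * _]mulrC.
by congr (_ * _); apply: eq_bigr => i /andP[_ /negbTE ->].
Qed.

Lemma vc_weight_rescale_at f w vc :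
  vc_weight ends c (rescale_at f w) vc = f (vc v0) * vc_weight ends c w vc.
Proof. by rewrite /vc_weight mulr_sumr; apply: eq_bigr => P /prod_rescale_at. Qed.

End Rescaling.

Section Vertexless.
Variables (V E : finType) (ends : E -> V * V) (c : E -> bool -> nat) (w : E -> CC).
Hypothesis noV : V -> False.

Lemma vc_weight_vertexless vc : vc_weight ends c w vc = 1.
Proof.
have noE (e : E) : False := noV (ends e).1.
have set_E0 (P : {set E}) : P = set0 by apply/setP => e; case: (noE e).
rewrite /vc_weight (big_pred1 set0) ?big_set0 // => P.
rewrite /= (set_E0 P) eqxx; apply/andP.
by split; apply/forallP => x; [case: (noE x) | case: (noV x)].
Qed.

Lemma is_GHZ_vertexless : is_GHZ ends c w.
Proof.
split=> vc; first by rewrite vc_weight_vertexless.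
by case; exists 0%N => v; case: (noV v).
Qed.

End Vertexless.

Theorem lemma1 (V E : finType) (ends : E -> V * V)
  (no_loops : forall e, (ends e).1 != (ends e).2)
  (c : E -> bool -> nat) (w : E -> CC) :
  is_gGHZ ends c w ->
  exists w' : E -> CC,
    is_GHZ ends c w' /\
    (forall n, has_dimension ends c n <-> has_dimension ends c n).
Proof.
move=> [mono_nz nonmono_0].
have [v0 _ | noV] := pickP (fun _ : V => true); last first.
  by exists w; split=> //; apply: is_GHZ_vertexless => v; have := noV v.
pose normalise k := (vc_weight ends c w (fun _ => k))^-1.
exists (rescale_at ends c v0 normalise w); split=> //; split=> vc.
- move=> [k vcE] feas_vc.
  have vc_k : vc = (fun _ => k) by apply: functional_extensionality.
  have nz := mono_nz vc (ex_intro _ k vcE) feas_vc.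
  by rewrite vc_weight_rescale_at /normalise vcE -vc_k mulVf.
- by move=> nonmono_vc; rewrite vc_weight_rescale_at nonmono_0 // mulr0.
Qed.
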